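(* Let $R$ be a commutative local ring, $s\in R$, and $A\in M_2(R;s)$. Then ($\det_s(A)\in J(R)$, $tr(A)\in J(R)$ and $A$ is strongly $J$-clean in $M_2(R;s)$) if and only if $A\in J\big(M_2(R;s)\big)$.
   Context: A commutative ring $R$ is local if it has a unique maximal ideal $J(R)$ (its Jacobson radical); $J(T)$ denotes the Jacobson radical of a ring $T$. For a commutative ring $R$ and $s\in R$, $M_2(R;s)$ denotes the ring whose elements are the $2\times 2$ arrays $\left[\begin{smallmatrix} a&b\\ c&d\end{smallmatrix}\right]$ with $a,b,c,d\in R$, with componentwise addition and multiplication $\left[\begin{smallmatrix} a&b\\ c&d\end{smallmatrix}\right]\left[\begin{smallmatrix} a'&b'\\ c'&d'\end{smallmatrix}\right]=\left[\begin{smallmatrix} aa'+s^2bc'&ab'+bd'\\ ca'+dc'&s^2cb'+dd'\end{smallmatrix}\right]$. For $A=\left[\begin{smallmatrix} a&b\\ c&d\end{smallmatrix}\right]$, $\det_s(A)=ad-s^2bc$ and $tr(A)=a+d$. An element $a$ of a ring $T$ is strongly $J$-clean if there is an idempotent $e\in T$ with $ae=ea$ and $a-e\in J(T)$. *)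

From HB Require Import structures.
From mathcomp Require Import all_boot all_algebra.
From mathcomp Require Import ring.
Set Implicit Arguments. Unset Strict Implicit. Unset Printing Implicit Defensive.
Import GRing.Theory.
Local Open Scope ring_scope.

Definition left_ideal (T : pzRingType) (I : T -> Prop) : Prop :=
  [/\ I 0, (forall x y, I x -> I y -> I (x + y)) & (forall r x, I x -> I (r * x))].

Definition maximal_left_ideal (T : pzRingType) (I : T -> Prop) : Prop :=
  [/\ left_ideal I, ~ I 1 &
      forall K : T -> Prop, left_ideal K -> ~ K 1 ->
        (forall x, I x -> K x) -> forall x, K x -> I x].

Definition jacobson (T : pzRingType) (x : T) : Prop :=
  forall I : T -> Prop, maximal_left_ideal I -> I x.

(* for a commutative ring, left ideals are the ideals; local = unique
   maximal ideal *)
Definition local_ring (R : comPzRingType) : Prop :=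
  exists M : R -> Prop, maximal_left_ideal M /\
    forall N : R -> Prop, maximal_left_ideal N -> forall x, N x <-> M x.

Definition strongly_J_clean (T : pzRingType) (a : T) : Prop :=
  exists e : T, [/\ e * e = e, a * e = e * a & jacobson (a - e)].

Record M2 (R : comNzRingType) (s : R) : Type :=
  Mk2 { m11 : R; m12 : R; m21 : R; m22 : R }.
Arguments Mk2 {R s}.

Section M2ring.
Variables (R : comNzRingType) (s : R).
Local Notation T := (M2 s).

Definition M2_enc (A : T) := (m11 A, m12 A, m21 A, m22 A).
Definition M2_dec (x : R * R * R * R) : T :=
  let: (a, b, c, d) := x in Mk2 a b c d.
Lemma M2_encK : cancel M2_enc M2_dec. Proof. by case. Qed.

HB.instance Definition _ := Choice.copy T (can_type M2_encK).

Definition M2_zero : T := Mk2 0 0 0 0.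
Definition M2_add (A B : T) : T :=
  Mk2 (m11 A + m11 B) (m12 A + m12 B) (m21 A + m21 B) (m22 A + m22 B).
Definition M2_opp (A : T) : T := Mk2 (- m11 A) (- m12 A) (- m21 A) (- m22 A).

Lemma M2_addA : associative M2_add.
Proof. by move=> [????] [????] [????]; rewrite /M2_add /=; congr Mk2; ring. Qed.
Lemma M2_addC : commutative M2_add.
Proof. by move=> [????] [????]; rewrite /M2_add /=; congr Mk2; ring. Qed.
Lemma M2_add0 : left_id M2_zero M2_add.
Proof. by move=> [????]; rewrite /M2_add /=; congr Mk2; ring. Qed.
Lemma M2_addN : left_inverse M2_zero M2_opp M2_add.
Proof. by move=> [????]; rewrite /M2_add /=; congr Mk2; ring. Qed.

HB.instance Definition _ := GRing.isZmodule.Build T M2_addA M2_addC M2_add0 M2_addN.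

Definition M2_one : T := Mk2 1 0 0 1.
(* [a b; c d] [a' b'; c' d'] =
   [aa' + s^2 bc'   ab' + bd'; ca' + dc'   s^2 cb' + dd'] *)
Definition M2_mul (A B : T) : T :=
  Mk2 (m11 A * m11 B + s ^+ 2 * m12 A * m21 B)
      (m11 A * m12 B + m12 A * m22 B)
      (m21 A * m11 B + m22 A * m21 B)
      (s ^+ 2 * m21 A * m12 B + m22 A * m22 B).

Lemma M2_mulA : associative M2_mul.
Proof. by move=> [????] [????] [????]; rewrite /M2_mul /=; congr Mk2; ring. Qed.
Lemma M2_mul1 : left_id M2_one M2_mul.
Proof. by move=> [????]; rewrite /M2_mul /=; congr Mk2; ring. Qed.
Lemma M2_mulr1 : right_id M2_one M2_mul.
Proof. by move=> [????]; rewrite /M2_mul /=; congr Mk2; ring. Qed.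
Lemma M2_mulDl' : left_distributive M2_mul M2_add.
Proof. by move=> [????] [????] [????]; rewrite /M2_mul /M2_add /=; congr Mk2; ring. Qed.
Lemma M2_mulDr' : right_distributive M2_mul M2_add.
Proof. by move=> [????] [????] [????]; rewrite /M2_mul /M2_add /=; congr Mk2; ring. Qed.
Lemma M2_mulDl : left_distributive M2_mul +%R.
Proof. exact: M2_mulDl'. Qed.
Lemma M2_mulDr : right_distributive M2_mul +%R.
Proof. exact: M2_mulDr'. Qed.
Lemma M2_one_neq0 : M2_one != 0.
Proof.
apply/eqP => /(congr1 (@m11 R s)) /= /eqP; by rewrite oner_eq0.
Qed.

HB.instance Definition _ := GRing.Zmodule_isNzRing.Build T
  M2_mulA M2_mul1 M2_mulr1 M2_mulDl M2_mulDr M2_one_neq0.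

End M2ring.

Definition det_s (R : comNzRingType) (s : R) (A : M2 s) : R :=
  m11 A * m22 A - s ^+ 2 * m12 A * m21 A.
Definition tr2 (R : comNzRingType) (s : R) (A : M2 s) : R := m11 A + m22 A.

From mathcomp Require Import all_boot all_algebra ring.
From mathcomp Require classical_sets.
From Stdlib Require Import Classical.
Set Implicit Arguments. Unset Strict Implicit. Unset Printing Implicit Defensive.
Import GRing.Theory.
Local Open Scope ring_scope.

(* For A in J(M_2(R;s)), left multiplying by a suitable matrix turns any
   unit among a, d, s^2 b, s^2 c into an idempotent in the radical with a 1
   on the diagonal, which is impossible; so in a local ring these four are in
   J(R), hence so are tr(A) and det_s(A). Conversely, if A - e is in the
   radical with e idempotent, then tr(e) and det_s(e) lie in J(R), so 1 - tr(e)
   is a unit, and the Cayley-Hamilton identity e^2 = tr(e) e - det_s(e)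
   forces e to be a scalar idempotent from J(R), i.e. e = 0. *)

Section Jacobson.
Variable T : pzRingType.

Lemma exists_maximal_left_ideal (K : T -> Prop) : left_ideal K -> ~ K 1 ->
  exists I, maximal_left_ideal I /\ (forall x, K x -> I x).
Proof.
move=> [K0 KD KM] K1.
(* Zorn is applied to the sets B with B \/ K a proper left ideal, so that the
   union of the empty chain is still admissible. *)
pose P := fun B : T -> Prop =>
  left_ideal (fun x => B x \/ K x) /\ ~ (B 1 \/ K 1).
have [A [PA Amax]] : exists A, P A /\ forall B, classical_sets.proper A B -> ~ P B.
  apply: classical_sets.Zorn_bigcup => F FP Ftot.
  rewrite /classical_sets.bigcup /=.
  have common : forall x y, (exists2 X, F X & X x) \/ K x ->
      (exists2 X, F X & X y) \/ K y ->
      exists X, F X /\ (X x \/ K x) /\ (X y \/ K y) \/ (K x /\ K y).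
    move=> x y [[X FX Xx]|Kx] [[Y FY Yy]|Ky].
    - have [XY|YX] := Ftot X Y FX FY.
        by exists Y; left; split => //; split; left => //; apply: XY.
      by exists X; left; split => //; split; left => //; apply: YX.
    - by exists X; left; split => //; split; [left|right].
    - by exists Y; left; split => //; split; [right|left].
    - by exists K; right.
  split; last by move=> [[X FX X1]|//]; have [_ []] := FP X FX; left.
  split; first by right.
  - move=> x y Hx Hy; have [X [[FX [Hx' Hy']]|[Kx Ky]]] := common x y Hx Hy;
      last by right; apply: KD.
    have [[_ XD _] _] := FP X FX.
    by case: (XD x y Hx' Hy') => [Xs|Ks]; [left; exists X|right].
  - move=> r x Hx; have [X [[FX [Hx' _]]|[Kx _]]] := common x x Hx Hx;
      last by right; apply: KM.
    have [[_ _ XM] _] := FP X FX.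
    by case: (XM r x Hx') => [Xs|Ks]; [left; exists X|right].
exists (fun x => A x \/ K x); split; last by move=> x Kx; right.
have [AI A1] := PA.
split => // K' [H0 HD HM] K'1 AK' x K'x.
have [sub|nsub] := classic (forall y, K' y -> A y); first by left; apply: sub.
exfalso; apply: (Amax K'); first by split => // y Ay; apply: AK'; left.
have K'K : forall y, (K' y \/ K y) <-> K' y.
  by move=> y; split => [[//|Ky]|]; [apply: AK'; right|left].
split; last by case.
split; first by left.
- by move=> a b /K'K Ha /K'K Hb; left; apply: HD.
- by move=> r a /K'K Ha; left; apply: HM.
Qed.

Lemma jacobsonD (x y : T) : jacobson x -> jacobson y -> jacobson (x + y).
Proof. by move=> Jx Jy I HI; case: (HI) => [[_ ID _] _ _]; exact: ID (Jx I HI) (Jy I HI). Qed.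

Lemma jacobsonMl (r x : T) : jacobson x -> jacobson (r * x).
Proof. by move=> Jx I HI; case: (HI) => [[_ _ IM] _ _]; exact: IM (Jx I HI). Qed.

Lemma jacobsonN (x : T) : jacobson x -> jacobson (- x).
Proof. by rewrite -mulN1r; apply: jacobsonMl. Qed.

Lemma jacobsonB (x y : T) : jacobson x -> jacobson y -> jacobson (x - y).
Proof. by move=> Jx Jy; apply: jacobsonD => //; apply: jacobsonN. Qed.

Lemma nonunit_maximal_left_ideal (a : T) : ~ (exists u, u * a = 1) ->
  exists I, maximal_left_ideal I /\ I a.
Proof.
move=> nunit.
pose K := fun y => exists c, y = c * a.
have KI : left_ideal K.
  split; first by exists 0; rewrite mul0r.
  - by move=> x y [c ->] [d ->]; exists (c + d); rewrite mulrDl.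
  - by move=> x y [c ->]; exists (x * c); rewrite mulrA.
have K1 : ~ K 1 by move=> [c c1]; apply: nunit; exists c.
have [I [Imax KI']] := exists_maximal_left_ideal KI K1.
by exists I; split => //; apply: KI'; exists 1; rewrite mul1r.
Qed.

Lemma jacobson_unit_subr (x : T) : jacobson x -> exists u, u * (1 - x) = 1.
Proof.
move=> Jx; apply: NNPP => /nonunit_maximal_left_ideal [I [Imax I1x]].
have [[_ ID _] I1 _] := Imax; apply: I1.
by rewrite -(subrK x 1); apply: ID I1x (Jx I Imax).
Qed.

Lemma jacobson_idem_eq0 (x : T) : jacobson x -> x * x = x -> x = 0.
Proof.
move=> /jacobson_unit_subr [u hu] xx.
by rewrite -[x]mul1r -hu -mulrA mulrBl mul1r xx subrr mulr0.
Qed.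

End Jacobson.

Lemma jacobsonMr (R : comPzRingType) (x r : R) : jacobson x -> jacobson (x * r).
Proof. by rewrite mulrC; apply: jacobsonMl. Qed.

Lemma local_nonjacobson_unit (R : comPzRingType) (x : R) :
  local_ring R -> ~ jacobson x -> exists y, y * x = 1.
Proof.
move=> [M [_ Muniq]] nJx; apply: NNPP => /nonunit_maximal_left_ideal [N' [N'max N'x]].
by apply: nJx => N Nmax; apply/(Muniq _ Nmax)/(Muniq _ N'max).
Qed.

Section M2Jacobson.
Variables (R : comNzRingType) (s : R).
Local Notation T := (M2 s).

Definition M2_scalar (x : R) : T := Mk2 x 0 0 x.

Lemma M2_cayley_hamilton (e : T) :
  e * e = M2_scalar (tr2 e) * e - M2_scalar (det_s e).
Proof. by case: e => p q r w; congr Mk2; rewrite /tr2 /det_s /=; ring. Qed.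

Lemma M2_idem_scalar (e : T) (u : R) :
  e * e = e -> u * (1 - tr2 e) = 1 -> e = M2_scalar (- (u * det_s e)).
Proof.
move=> ee hu; have := M2_cayley_hamilton e; rewrite ee.
case: e {ee} hu => p q r w; rewrite /tr2 /det_s /= => hu [E1 E2 E3 E4].
have solve x : u * (x - (p + w) * x) = x.
  by rewrite -[x in x - _]mul1r -mulrBl mulrA hu mul1r.
have D1 : p - (p + w) * p = - (p * w - s ^+ 2 * q * r) by rewrite {1}E1; ring.
have D2 : q - (p + w) * q = 0 by rewrite {1}E2; ring.
have D3 : r - (p + w) * r = 0 by rewrite {1}E3; ring.
have D4 : w - (p + w) * w = - (p * w - s ^+ 2 * q * r) by rewrite {1}E4; ring.
by congr Mk2; rewrite -[LHS]solve ?D1 ?D2 ?D3 ?D4 ?mulr0 ?mulrN.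
Qed.

Lemma M2_idem_top (t : R) : Mk2 1 t 0 0 * Mk2 1 t 0 0 = Mk2 1 t 0 0 :> T.
Proof. by congr Mk2 => /=; ring. Qed.

Lemma M2_idem_bot (t : R) : Mk2 0 0 t 1 * Mk2 0 0 t 1 = Mk2 0 0 t 1 :> T.
Proof. by congr Mk2 => /=; ring. Qed.

Lemma jacobson_M2_entries (A : T) : local_ring R -> jacobson A ->
  [/\ jacobson (m11 A), jacobson (m22 A),
      jacobson (s ^+ 2 * m12 A) & jacobson (s ^+ 2 * m21 A)].
Proof.
move=> Rloc JA.
have idem_eq0 (r B : T) : r * A = B -> B * B = B -> B = 0.
  by move=> <-; apply: jacobson_idem_eq0; apply: jacobsonMl.
have one0 : (1 : R) <> 0 by apply/eqP; rewrite oner_eq0.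
case: A JA idem_eq0 => a b c d /= JA idem_eq0.
split; apply: NNPP => /(local_nonjacobson_unit Rloc) [y hy]; apply: one0.
- have rA : Mk2 y 0 0 0 * Mk2 a b c d = Mk2 1 (y * b) 0 0 :> T.
    by congr Mk2 => /=; rewrite -?hy; ring.
  exact: (congr1 (@m11 R s) (idem_eq0 _ _ rA (M2_idem_top _)) : 1 = 0).
- have rA : Mk2 0 0 0 y * Mk2 a b c d = Mk2 0 0 (y * c) 1 :> T.
    by congr Mk2 => /=; rewrite -?hy; ring.
  exact: (congr1 (@m22 R s) (idem_eq0 _ _ rA (M2_idem_bot _)) : 1 = 0).
- have rA : Mk2 0 0 y 0 * Mk2 a b c d = Mk2 0 0 (y * a) 1 :> T.
    by congr Mk2 => /=; rewrite -?hy; ring.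
  exact: (congr1 (@m22 R s) (idem_eq0 _ _ rA (M2_idem_bot _)) : 1 = 0).
- have rA : Mk2 0 y 0 0 * Mk2 a b c d = Mk2 1 (y * d) 0 0 :> T.
    by congr Mk2 => /=; rewrite -?hy; ring.
  exact: (congr1 (@m11 R s) (idem_eq0 _ _ rA (M2_idem_top _)) : 1 = 0).
Qed.

Lemma jacobson_M2_tr_det (A : T) : local_ring R -> jacobson A ->
  jacobson (tr2 A) /\ jacobson (det_s A).
Proof.
move=> Rloc /(jacobson_M2_entries Rloc) [Ja Jd Jb Jc]; split.
  exact: jacobsonD.
by apply: jacobsonB; apply: jacobsonMr.
Qed.

Lemma jacobson_M2_tr_det_subr (A B : T) : local_ring R -> jacobson (A - B) ->
  jacobson (tr2 A) -> jacobson (det_s A) ->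
  jacobson (tr2 B) /\ jacobson (det_s B).
Proof.
move=> Rloc /(jacobson_M2_entries Rloc) [].
case: A B => a b c d [p q r w]; rewrite /tr2 /det_s /= => Jap Jdw Jbq Jcr JtrA JdetA.
split.
  have -> : p + w = (a + d) - (a - p) - (d - w) by ring.
  by apply: jacobsonB => //; apply: jacobsonB.
have -> : p * w - s ^+ 2 * q * r = (a * d - s ^+ 2 * b * c)
   - ((a - p) * d + (d - w) * p - s ^+ 2 * (b - q) * c - s ^+ 2 * (c - r) * q)
  by ring.
apply: jacobsonB => //.
by apply: jacobsonB; [apply: jacobsonB; [apply: jacobsonD|]|]; apply: jacobsonMr.
Qed.

Lemma jacobson_tr_det_M2_idem_eq0 (e : T) : e * e = e ->
  jacobson (tr2 e) -> jacobson (det_s e) -> e = 0.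
Proof.
move=> ee /jacobson_unit_subr [u hu] Jdet.
have el := M2_idem_scalar ee hu; set l := - (u * det_s e) in el.
have Jl : jacobson l by apply: jacobsonN; apply: jacobsonMl.
have ll : l * l = l by have := congr1 (@m11 R s) ee; rewrite el /= mulr0 addr0.
by rewrite el (jacobson_idem_eq0 Jl ll).
Qed.

End M2Jacobson.

Theorem proposition3p3 (R : comNzRingType) (s : R) (A : M2 s) :
  local_ring R ->
  ((jacobson (det_s A) /\ jacobson (tr2 A) /\ strongly_J_clean A) <->
   jacobson A).
Proof.
move=> Rloc; split.
  move=> [Jdet [Jtr [e [ee _ JAe]]]].
  have [Jtre Jdete] := jacobson_M2_tr_det_subr Rloc JAe Jtr Jdet.
  by rewrite -(subr0 A) -(jacobson_tr_det_M2_idem_eq0 ee Jtre Jdete).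
move=> JA; have [Jtr Jdet] := jacobson_M2_tr_det Rloc JA.
do 2!split => //; exists 0.
by split; rewrite ?mulr0 ?mul0r ?subr0.
Qed.
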